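(* Let $B\in\mathbb{R}^{n\times d}$ with $\|B\|=R\in(0,\infty)$, $g^*:\mathbb{R}^n\to\mathbb{R}\cup\{+\infty\}$ proper, lower semicontinuous and $\gamma$-strongly convex ($\gamma\ge0$), $\ell:\mathbb{R}^d\to\mathbb{R}\cup\{+\infty\}$ proper, lower semicontinuous and $\sigma$-strongly convex ($\sigma\ge0$). For the PDA$^2$ algorithm in the context, for all $(u,v)\in\mathcal{X}\times\mathcal{Y}$ and $k\ge1$, $$\begin{aligned}\psi_k(y_k)\ge\;&\psi_{k-1}(y_{k-1})+\frac{1+\gamma A_{k-1}}{2}\|y_k-y_{k-1}\|^2+a_k\big(g^*(y_k)+\langle-Bx_k,y_k-v\rangle\big)\\&+a_k\langle B(x_k-x_{k-1}),y_k-v\rangle-a_{k-1}\langle B(x_{k-1}-x_{k-2}),y_{k-1}-v\rangle-a_{k-1}\langle B(x_{k-1}-x_{k-2}),y_k-y_{k-1}\rangle,\end{aligned}$$ $$\phi_k(x_k)\ge\phi_{k-1}(x_{k-1})+\frac{1+\sigma A_{k-1}}{2}\|x_k-x_{k-1}\|^2+a_k\big(\langle x_k-u,B^Ty_k\rangle+\ell(x_k)\big).$$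
   Context: Norms are Euclidean; $\sigma$-strong convexity of $f$ means $f((1-\alpha)x+\alpha\hat x)\le(1-\alpha)f(x)+\alpha f(\hat x)-\frac\sigma2\alpha(1-\alpha)\|\hat x-x\|^2$ for all $x,\hat x$, $\alpha\in(0,1)$. $\mathcal{X}=\mathrm{dom}(\ell)$, $\mathcal{Y}=\mathrm{dom}(g^* )$. PDA$^2$ algorithm: given $(x_0,y_0),(u,v)\in\mathcal{X}\times\mathcal{Y}$, set $a_0=A_0=0$, $x_{-1}=x_0$, $\phi_0(x)=\frac12\|x-x_0\|^2$, $\psi_0(y)=\frac12\|y-y_0\|^2$. For $k=1,2,\dots$: $a_k=\frac{\sqrt{(1+\sigma A_{k-1})(1+\gamma A_{k-1})}}{\sqrt2R}$, $A_k=A_{k-1}+a_k$; $\bar x_{k-1}=x_{k-1}+\frac{a_{k-1}}{a_k}(x_{k-1}-x_{k-2})$; $\psi_k(y)=\psi_{k-1}(y)+a_k(\langle-B\bar x_{k-1},y-v\rangle+g^*(y))$, $y_k=\arg\min_{y}\psi_k(y)$; $\phi_k(x)=\phi_{k-1}(x)+a_k(\langle x-u,B^Ty_k\rangle+\ell(x))$, $x_k=\arg\min_x\phi_k(x)$. *)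

From HB Require Import structures.
From mathcomp Require Import all_boot all_order all_algebra.
From mathcomp Require Import all_classical all_reals all_analysis.
Set Implicit Arguments. Unset Strict Implicit. Unset Printing Implicit Defensive.
Import Order.TTheory GRing.Theory Num.Theory.
Import numFieldNormedType.Exports.
Local Open Scope ring_scope.

Section Defs.
Variable R : realType.

Definition dotv m (u v : 'cV[R]_m) : R := \sum_(i < m) u i ord0 * v i ord0.
Definition normv m (u : 'cV[R]_m) : R := Num.sqrt (dotv u u).

Definition is_opnorm n d (B : 'M[R]_(n, d)) (r : R) : Prop :=
  (forall x : 'cV[R]_d, normv (B *m x) <= r * normv x) /\
  (forall c : R, (forall x : 'cV[R]_d, normv (B *m x) <= c * normv x) -> r <= c).

Local Open Scope ereal_scope.

Definition proper_fun m (f : 'cV[R]_m -> \bar R) : Prop :=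
  (forall x, f x != -oo) /\ (exists x, f x < +oo).

Definition edom m (f : 'cV[R]_m -> \bar R) : set 'cV[R]_m := [set x | f x < +oo].

Definition strongly_convex m (s : R) (f : 'cV[R]_m -> \bar R) : Prop :=
  forall (x xh : 'cV[R]_m) (al : R), (0 < al < 1)%R ->
    f ((1 - al) *: x + al *: xh)%R <=
    (1 - al)%:E * f x + al%:E * f xh
      - (s / 2 * al * (1 - al) * normv (xh - x)%R ^+ 2)%:E.

Local Close Scope ereal_scope.

Fixpoint stepsAA (sigma gamma Rb : R) (k : nat) : R * R :=
  match k with
  | 0 => (0, 0)
  | k'.+1 =>
      let Ap := (stepsAA sigma gamma Rb k').2 in
      let ak := Num.sqrt ((1 + sigma * Ap) * (1 + gamma * Ap)) / (Num.sqrt 2 * Rb) in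
      (ak, Ap + ak)
  end.
Definition step_a sigma gamma Rb k := (stepsAA sigma gamma Rb k).1.
Definition step_A sigma gamma Rb k := (stepsAA sigma gamma Rb k).2.

(* extrapolated point  bar x_{k-1} = x_{k-1} + a_{k-1}/a_k (x_{k-1} - x_{k-2}),
   for k >= 1, with x_{-1} = x_0 (realised by truncated subtraction k-2). *)
Definition xbar d (a : nat -> R) (x : nat -> 'cV[R]_d) (k : nat) : 'cV[R]_d :=
  x (k - 1)%N + (a (k - 1)%N / a k) *: (x (k - 1)%N - x (k - 2)%N).

Local Open Scope ereal_scope.

Definition psi_fun n d (B : 'M[R]_(n, d)) (gs : 'cV[R]_n -> \bar R)
    (a : nat -> R) (x : nat -> 'cV[R]_d) (y0 v : 'cV[R]_n) (k : nat)
    (y : 'cV[R]_n) : \bar R :=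
  (normv (y - y0)%R ^+ 2 / 2)%:E +
  \sum_(1 <= i < k.+1) (a i)%:E *
      ((dotv (- (B *m xbar a x i))%R (y - v)%R)%:E + gs y).

Definition phi_fun n d (B : 'M[R]_(n, d)) (l : 'cV[R]_d -> \bar R)
    (a : nat -> R) (y : nat -> 'cV[R]_n) (x0 u : 'cV[R]_d) (k : nat)
    (x : 'cV[R]_d) : \bar R :=
  (normv (x - x0)%R ^+ 2 / 2)%:E +
  \sum_(1 <= i < k.+1) (a i)%:E *
      ((dotv (x - u)%R (B^T *m y i))%:E + l x).

End Defs.

(* Both psi_k and phi_k have the shape
     F_j(y) = 1/2 ||y - y0||^2 + sum_(1 <= i <= j) a_i (h_i(y) + g(y))
   with affine h_i and a_i >= 0, so F_j is (1 + c A_j)-strongly convex when g is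
   c-strongly convex.  As y_j minimises F_j, strong convexity along the segment
   [y_j, y_(j+1)] yields F_j(y_(j+1)) >= F_j(y_j) + (1 + c A_j)/2 ||y_(j+1) - y_j||^2,
   and F_(j+1) = F_j + a_(j+1) (h_(j+1) + g).  For psi it only remains to expand the
   extrapolated coupling a_k <-B xbar_(k-1), y_k - v> into the terms of the statement. *)

From HB Require Import structures.
From mathcomp Require Import all_boot all_order all_algebra.
From mathcomp Require Import all_classical all_reals all_analysis.
From mathcomp Require Import ring lra.
Set Implicit Arguments. Unset Strict Implicit. Unset Printing Implicit Defensive.
Import Order.TTheory GRing.Theory Num.Theory.
Import numFieldNormedType.Exports.
Local Open Scope ring_scope.

Section Convexity.
Variables (R : realType) (m : nat).
Implicit Types (p q z : 'cV[R]_m) (f : 'cV[R]_m -> \bar R).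

Definition affine (h : 'cV[R]_m -> R) : Prop :=
  forall p q al, h ((1 - al) *: p + al *: q) = (1 - al) * h p + al * h q.

Lemma affine_dotv_subl u w : affine (fun z => dotv (z - u) w).
Proof.
move=> p q al; rewrite /dotv !mulr_sumr -big_split /=.
by apply: eq_bigr => i _; rewrite !mxE; ring.
Qed.

Lemma affine_dotv_subr w v : affine (fun z => dotv w (z - v)).
Proof.
move=> p q al; rewrite /dotv !mulr_sumr -big_split /=.
by apply: eq_bigr => i _; rewrite !mxE; ring.
Qed.

Lemma affine_sum (I : Type) (r : seq I) (P : pred I) (c : I -> R)
    (h : I -> 'cV[R]_m -> R) :
  (forall i, affine (h i)) -> affine (fun z => \sum_(i <- r | P i) c i * h i z).
Proof.
move=> hA p q al; rewrite !mulr_sumr -big_split /=.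
by apply: eq_bigr => i _; rewrite hA; ring.
Qed.

Lemma normv0 : normv (0 : 'cV[R]_m) = 0%R.
Proof. by rewrite /normv /dotv big1 ?sqrtr0 // => i _; rewrite mxE mul0r. Qed.

Lemma normv_sqr_comb p q (y0 : 'cV[R]_m) al :
  normv ((1 - al) *: p + al *: q - y0) ^+ 2 =
  (1 - al) * normv (p - y0) ^+ 2 + al * normv (q - y0) ^+ 2
  - al * (1 - al) * normv (q - p) ^+ 2.
Proof.
have dotv_ge0 (w : 'cV[R]_m) : 0 <= dotv w w.
  by apply: sumr_ge0 => i _; rewrite -expr2 sqr_ge0.
rewrite !sqr_sqrtr ?dotv_ge0 // /dotv !mulr_sumr -big_split -sumrB /=.
by apply: eq_bigr => i _; rewrite !mxE; ring.
Qed.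

Lemma ler_of_forall_addr_weight (x y K : R) : 0 <= K ->
  (forall al, 0 < al < 1 -> x <= y + al * K) -> x <= y.
Proof.
move=> K0 hxy; apply/ler_addgt0Pr => e e0.
have eK0 : 0 < e + (K + 1) by lra.
have al01 : 0 < e / (e + (K + 1)) < 1.
  by rewrite divr_gt0 //= ltr_pdivrMr // mul1r; lra.
apply: (le_trans (hxy _ al01)).
rewrite lerD2l mulrAC ler_pdivrMr // ler_pM2l //; lra.
Qed.

Local Open Scope ereal_scope.

Lemma EFin_add_mule_neqNy (r A : R) (G : \bar R) :
  (0 <= A)%R -> G != -oo -> r%:E + A%:E * G != -oo.
Proof.
rewrite le_eqVlt => /predU1P[<-|A_gt0]; first by rewrite mul0e adde0.
by case: G => [G| |] // _; rewrite (@gt0_muley R) ?lte_fin.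
Qed.

Lemma sume_mulEFinD (I : Type) (r : seq I) (P : pred I) (a h : I -> R)
    (G : \bar R) :
  (forall i, P i -> 0 <= a i)%R -> G != -oo ->
  \sum_(i <- r | P i) (a i)%:E * ((h i)%:E + G) =
  (\sum_(i <- r | P i) a i * h i)%:E + (\sum_(i <- r | P i) a i)%:E * G.
Proof.
move=> a0 GNy; rewrite -!sumEFin ge0_sume_distrl ?lee_fin // -big_split /=.
by apply: eq_bigr => i _; rewrite muleDr ?fin_num_adde_defr // EFinM.
Qed.

Lemma mule_EFinD_rebalance (al r r' e : R) (G : \bar R) : G != -oo ->
  (al * r = al * r' + e)%R -> al%:E * (r%:E + G) = al%:E * (G + r'%:E) + e%:E.
Proof.
move=> GNy E; rewrite [G + _]addeC !muleDr ?fin_num_adde_defr // -!EFinM E EFinD.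
by rewrite addeAC.
Qed.

Lemma strongly_convex_min_growth (mu : R) f p q : (0 <= mu)%R ->
  strongly_convex mu f -> (forall z, f p <= f z) -> f p \is a fin_num ->
  f p + (mu / 2 * normv (q - p) ^+ 2)%:E <= f q.
Proof.
move=> mu0 fsc pmin /fin_numP[pNy pFy].
move: (fsc p q); case: (f p) pmin pNy pFy => [P| |] // pmin _ _.
case: (f q) (pmin q) => [Q| |] // _ fPQ; last exact: leey.
rewrite -EFinD lee_fin -lerBrDl.
apply: (ler_of_forall_addr_weight (K := mu / 2 * normv (q - p) ^+ 2)).
  by rewrite mulr_ge0 ?sqr_ge0 ?divr_ge0.
move=> al al01; have [al0 _] := andP al01.
(* Compare f p with f at (1 - al) p + al q, then divide by al. *)
have := le_trans (pmin _) (fPQ al al01).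
rewrite -!EFinM -!EFinD lee_fin => hP.
rewrite -(ler_pM2l al0); nra.
Qed.

Lemma strongly_convex_of_fin (s : R) f : (forall y, f y != -oo) ->
  (forall p q al (P Q : R), (0 < al < 1)%R -> f p = P%:E -> f q = Q%:E ->
     f ((1 - al) *: p + al *: q)%R <=
     ((1 - al) * P + al * Q - s / 2 * al * (1 - al) * normv (q - p) ^+ 2)%:E) ->
  strongly_convex s f.
Proof.
move=> fNy fsc p q al al01; have [al0 al1] := andP al01.
have al1' : (0 < 1 - al)%R by rewrite subr_gt0.
move: (fNy p) (fNy q) (fsc p q al).
case: (f p) => [P| |] //; case: (f q) => [Q| |] // _ _.
- by move=> /(_ _ _ al01 erefl erefl); rewrite -!EFinM -!EFinD.
- by rewrite (@gt0_muley R) ?lte_fin // -(@EFinM R) (@addey R) // (@addye R) // leey.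
- by rewrite (@gt0_muley R) ?lte_fin // -(@EFinM R) !(@addye R) // leey.
- by rewrite !(@gt0_muley R) ?lte_fin // !(@addye R) // leey.
Qed.

Lemma strongly_convex_half_sqr_add (y0 : 'cV[R]_m) h : affine h ->
  strongly_convex 1 (fun y => (normv (y - y0) ^+ 2 / 2 + h y)%:E).
Proof.
move=> hA p q al _; rewrite -!EFinM -!EFinD lee_fin normv_sqr_comb hA.
lra.
Qed.

Lemma strongly_convex_EFin_add_scale (s c A : R) (Q : 'cV[R]_m -> R) g :
  (0 <= A)%R -> (forall y, g y != -oo) ->
  strongly_convex s (fun y => (Q y)%:E) -> strongly_convex c g ->
  strongly_convex (s + A * c) (fun y => (Q y)%:E + A%:E * g y).
Proof.
move=> A_ge0 gNy Qsc gsc; move: (A_ge0).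
rewrite le_eqVlt => /predU1P[<-|A_gt0].
  by move=> p q al al01; rewrite !mul0e !adde0 mul0r addr0; exact: Qsc.
have gfin y Y : (Q y)%:E + A%:E * g y = Y%:E ->
    exists2 G, g y = G%:E & Y = (Q y + A * G)%R.
  case: (g y) (gNy y) => [G _| _|//]; last by rewrite (@gt0_muley R) ?lte_fin.
  by rewrite -(@EFinM R) -(@EFinD R) => -[<-]; exists G.
apply: strongly_convex_of_fin => [y|p q al P P' al01 /gfin[Gp gp ->] /gfin[Gq gq ->]].
  exact: EFin_add_mule_neqNy.
have := gsc p q al al01; rewrite gp gq -!(@EFinM R) -!(@EFinD R).
case: (g _) (gNy ((1 - al) *: p + al *: q)%R) => [Gz _| //|//].
rewrite -(@EFinM R) -(@EFinD R) !lee_fin => gz.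
have := Qsc p q al al01; rewrite -!(@EFinM R) -!(@EFinD R) lee_fin => Qz.
have := ler_wpM2l (ltW A_gt0) gz; lra.
Qed.

End Convexity.

Section ProxSum.
Local Open Scope ereal_scope.
Variables (R : realType) (m : nat) (g : 'cV[R]_m -> \bar R) (c : R).
Variables (a : nat -> R) (h : nat -> 'cV[R]_m -> R) (y0 : 'cV[R]_m).
Hypotheses (a_ge0 : forall i, (0 <= a i)%R) (c_ge0 : (0 <= c)%R).
Hypotheses (gNy : forall y, g y != -oo) (g_sc : strongly_convex c g).
Hypothesis h_affine : forall i, affine (h i).

(* [psi_fun] and [phi_fun] unfold to instances of [prox_sum]. *)
Definition prox_sum (j : nat) (y : 'cV[R]_m) : \bar R :=
  (normv (y - y0) ^+ 2 / 2)%:E + \sum_(1 <= i < j.+1) (a i)%:E * ((h i y)%:E + g y).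

Lemma prox_sumS j y :
  prox_sum j.+1 y = prox_sum j y + (a j.+1)%:E * ((h j.+1 y)%:E + g y).
Proof. by rewrite /prox_sum big_nat_recr //= addeA. Qed.

Lemma prox_sumE j y : prox_sum j y =
  (normv (y - y0) ^+ 2 / 2 + \sum_(1 <= i < j.+1) a i * h i y)%:E
  + (\sum_(1 <= i < j.+1) a i)%:E * g y.
Proof. by rewrite /prox_sum sume_mulEFinD // EFinD addeA. Qed.

Lemma prox_sum_strongly_convex j :
  strongly_convex (1 + c * \sum_(1 <= i < j.+1) a i) (prox_sum j).
Proof.
set A := (\sum_(1 <= i < j.+1) a i)%R.
have sc : strongly_convex (1 + A * c) (fun y =>
    (normv (y - y0) ^+ 2 / 2 + \sum_(1 <= i < j.+1) a i * h i y)%:E + A%:E * g y).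
  apply: strongly_convex_EFin_add_scale => //; first exact: sumr_ge0.
  by apply: strongly_convex_half_sqr_add; exact: affine_sum.
by move=> p q al al01; rewrite !prox_sumE [(c * _)%R]mulrC; exact: sc.
Qed.

Lemma prox_sum0_min z : prox_sum 0 y0 <= prox_sum 0 z.
Proof.
rewrite /prox_sum !big_geq // !adde0 lee_fin subrr normv0 expr0n /= mul0r.
by rewrite divr_ge0 ?sqr_ge0.
Qed.

Lemma prox_sum_step j p q v : g v < +oo ->
  (forall z, prox_sum j p <= prox_sum j z) ->
  prox_sum j p + ((1 + c * \sum_(1 <= i < j.+1) a i) / 2 * normv (q - p) ^+ 2)%:E
    + (a j.+1)%:E * ((h j.+1 q)%:E + g q) <= prox_sum j.+1 q.
Proof.
move=> gv pmin; rewrite prox_sumS leeD2r // strongly_convex_min_growth //.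
- by rewrite addr_ge0 ?mulr_ge0 ?sumr_ge0.
- exact: prox_sum_strongly_convex.
apply/fin_numP; split.
  by rewrite prox_sumE EFin_add_mule_neqNy ?sumr_ge0.
rewrite -ltey (le_lt_trans (pmin v)) // prox_sumE.
by case: (g v) gv (gNy v) => [G| |] // _ _; rewrite -(@EFinM R) -(@EFinD R) ltry.
Qed.

End ProxSum.

Section StepSizes.
Variables (R : realType) (sigma gamma Rb : R).

Lemma step_A_sum k :
  step_A sigma gamma Rb k = \sum_(1 <= i < k.+1) step_a sigma gamma Rb i.
Proof.
elim: k => [|k IH]; first by rewrite big_geq.
by rewrite big_nat_recr //= -IH.
Qed.

Hypotheses (Rb_gt0 : 0 < Rb) (sigma_ge0 : 0 <= sigma) (gamma_ge0 : 0 <= gamma).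

Lemma step_a_ge0 k : 0 <= step_a sigma gamma Rb k.
Proof.
case: k => [|k]; rewrite /step_a //=.
by rewrite divr_ge0 ?sqrtr_ge0 // mulr_ge0 ?sqrtr_ge0 ?ltW.
Qed.

Lemma step_a_gt0 k : 0 < step_a sigma gamma Rb k.+1.
Proof.
have A_ge0 : 0 <= step_A sigma gamma Rb k.
  by rewrite step_A_sum sumr_ge0 // => i _; exact: step_a_ge0.
rewrite /step_a /= divr_gt0 // ?mulr_gt0 ?sqrtr_gt0 //.
by rewrite mulr_gt0 // ltr_wpDr ?mulr_ge0.
Qed.

End StepSizes.

Lemma dotv_xbar_split (R : realType) n d (B : 'M[R]_(n, d)) (a1 a0 : R)
    (x1 x0 x_ : 'cV[R]_d) (q p v : 'cV[R]_n) : a1 != 0 ->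
  a1 * dotv (- (B *m (x0 + (a0 / a1) *: (x0 - x_)))) (q - v) =
  a1 * dotv (- (B *m x1)) (q - v) +
  (a1 * dotv (B *m (x1 - x0)) (q - v) - a0 * dotv (B *m (x0 - x_)) (p - v)
   - a0 * dotv (B *m (x0 - x_)) (q - p)).
Proof.
move=> a1_neq0; rewrite -{2 3}(divfK a1_neq0 a0).
rewrite mulmxDr !mulmxBr -scalemxAr mulmxBr.
move: (a0 / a1) (B *m x1) (B *m x0) (B *m x_) => t X1 X0 X_.
rewrite /dotv !mulr_sumr -!sumrB -!big_split /=.
by apply: eq_bigr => i _; rewrite !mxE; ring.
Qed.

Theorem lemma2 (R : realType) (n d : nat) (B : 'M[R]_(n, d)) (Rb : R)
  (gs : 'cV[R]_n -> \bar R) (l : 'cV[R]_d -> \bar R) (gamma sigma : R)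
  (x : nat -> 'cV[R]_d) (y : nat -> 'cV[R]_n) (u : 'cV[R]_d) (v : 'cV[R]_n) :
  0 < Rb -> is_opnorm B Rb ->
  0 <= gamma -> proper_fun gs -> lower_semicontinuous gs -> strongly_convex gamma gs ->
  0 <= sigma -> proper_fun l -> lower_semicontinuous l -> strongly_convex sigma l ->
  edom l (x 0%N) -> edom gs (y 0%N) -> edom l u -> edom gs v ->
  (forall k : nat, (1 <= k)%N -> forall z : 'cV[R]_n,
     (psi_fun B gs (step_a sigma gamma Rb) x (y 0%N) v k (y k)
       <= psi_fun B gs (step_a sigma gamma Rb) x (y 0%N) v k z)%E) ->
  (forall k : nat, (1 <= k)%N -> forall z : 'cV[R]_d,
     (phi_fun B l (step_a sigma gamma Rb) y (x 0%N) u k (x k)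
       <= phi_fun B l (step_a sigma gamma Rb) y (x 0%N) u k z)%E) ->
  forall k : nat, (1 <= k)%N ->
    let a := step_a sigma gamma Rb in
    let A := step_A sigma gamma Rb in
    let psi := psi_fun B gs a x (y 0%N) v in
    let phi := phi_fun B l a y (x 0%N) u in
    (psi k (y k) >=
       psi (k - 1)%N (y (k - 1)%N)
       + ((1 + gamma * A (k - 1)%N) / 2 * normv (y k - y (k - 1)%N) ^+ 2)%:E
       + (a k)%:E * (gs (y k) + (dotv (- (B *m x k)) (y k - v))%:E)
       + (a k * dotv (B *m (x k - x (k - 1)%N)) (y k - v)
          - a (k - 1)%N * dotv (B *m (x (k - 1)%N - x (k - 2)%N)) (y (k - 1)%N - v)
          - a (k - 1)%N * dotv (B *m (x (k - 1)%N - x (k - 2)%N)) (y k - y (k - 1)%N))%:E)%E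
    /\
    (phi k (x k) >=
       phi (k - 1)%N (x (k - 1)%N)
       + ((1 + sigma * A (k - 1)%N) / 2 * normv (x k - x (k - 1)%N) ^+ 2)%:E
       + (a k)%:E * ((dotv (x k - u) (B^T *m y k))%:E + l (x k)))%E.
Proof.
move=> Rb_gt0 _ gamma_ge0 [gsNy _] _ gs_sc sigma_ge0 [lNy _] _ l_sc _ _ lu gsv.
move=> psi_min phi_min [//|j] _ a A psi phi; rewrite !subSS !subn0.
have a_ge0 := step_a_ge0 sigma gamma Rb_gt0.
have AE : A j = \sum_(1 <= i < j.+1) a i by exact: step_A_sum.
split.
- have psiE : psi =
      prox_sum gs a (fun i z => dotv (- (B *m xbar a x i)) (z - v)) (y 0%N) by [].
  have psi_min' i z : (psi i (y i) <= psi i z)%E.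
    by rewrite psiE; case: i => [|i]; [exact: prox_sum0_min | exact: psi_min].
  apply: le_trans (prox_sum_step a_ge0 gamma_ge0 gsNy gs_sc
    (fun i => affine_dotv_subr _ v) (y j.+1) gsv (psi_min' j)).
  rewrite -AE -addeA /= /xbar !subSS subn0.
  have a_neq0 : a j.+1 != 0 by rewrite gt_eqF ?step_a_gt0.
  by rewrite (mule_EFinD_rebalance (gsNy _)
    (dotv_xbar_split B _ (x j.+1) _ _ _ (y j) _ a_neq0)).
- have phiE : phi = prox_sum l a (fun i z => dotv (z - u) (B^T *m y i)) (x 0%N) by [].
  have phi_min' i z : (phi i (x i) <= phi i z)%E.
    by rewrite phiE; case: i => [|i]; [exact: prox_sum0_min | exact: phi_min].
  apply: le_trans (prox_sum_step a_ge0 sigma_ge0 lNy l_sc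
    (fun i => affine_dotv_subl u _) (x j.+1) lu (phi_min' j)).
  by rewrite -AE.
Qed.
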